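(* Let $G$ be a finite simple unmixed graph. Then the set $F$ of column vectors of the linear syzygy matrix $\mathcal{LS}(I_c(G))$ is a minimal system of generators of the $S$-submodule $S(F)\subseteq S^r$ generated by $F$ if and only if the graph $\mathcal{G}_{I_c(G)}$ has no strong $3$-cycles.
   Context: $G$ has vertices $t_1,\ldots,t_s$, $S=K[t_1,\ldots,t_s]$ with $K$ a field. $G$ is unmixed if all minimal vertex covers (inclusion-minimal sets of vertices meeting every edge) have equal size. Let $C_1,\ldots,C_r$ be the minimal vertex covers; $I_c(G)$ is generated by $u_i=\prod_{t_j\in C_i}t_j$. The graph $\mathcal{G}_{I_c(G)}$ has vertex set $\{C_1,\ldots,C_r\}$, with $\{C_i,C_j\}$ an edge iff $|C_i\cup C_j|=|C_i|+1$. For each edge $\{C_i,C_j\}$ with $i<j$ one has $C_j=(C_i\setminus\{t_{k'}\})\cup\{t_k\}$ for some vertices $t_k,t_{k'}$, and the corresponding column of $\mathcal{LS}(I_c(G))$ is $t_ke'_i-t_{k'}e'_j$, where $e'_1,\ldots,e'_r$ is the standard basis of $S^r$ (so $F$ consists of these vectors). A $3$-cycle $\{C_1,C_2,C_3,C_1\}$ of $\mathcal{G}_{I_c(G)}$ is strong if $C_2\setminus C_1=C_3\setminus C_1$. *)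

From HB Require Import structures.
From mathcomp Require Import all_boot all_algebra.
From mathcomp Require Import multinomials.mpoly.

Set Implicit Arguments.
Unset Strict Implicit.
Unset Printing Implicit Defensive.

Import GRing.Theory.
Local Open Scope ring_scope.

Definition simple_graph (s : nat) (e : rel 'I_s) : Prop :=
  (forall x y, e x y = e y x) /\ (forall x, e x x = false).

Definition vertex_cover (s : nat) (e : rel 'I_s) (C : {set 'I_s}) : Prop :=
  forall x y, e x y -> (x \in C) || (y \in C).

Definition minimal_vertex_cover (s : nat) (e : rel 'I_s) (C : {set 'I_s}) : Prop :=
  vertex_cover e C /\ forall D : {set 'I_s}, D \proper C -> ~ vertex_cover e D.

Definition unmixed (s : nat) (e : rel 'I_s) : Prop :=
  forall C D, minimal_vertex_cover e C -> minimal_vertex_cover e D -> #|C| = #|D|.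

Definition enum_min_covers (s : nat) (e : rel 'I_s) (r : nat)
  (C : 'I_r -> {set 'I_s}) : Prop :=
  injective C /\
  forall D : {set 'I_s}, minimal_vertex_cover e D <-> exists i, C i = D.

(* Edges of the graph G_{I_c(G)}: {C_i, C_j} with |C_i u C_j| = |C_i| + 1 *)
Definition cover_adj (s r : nat) (C : 'I_r -> {set 'I_s}) (i j : 'I_r) : bool :=
  #|C i :|: C j| == (#|C i| + 1)%N.

Definition has_strong_3cycle (s r : nat) (C : 'I_r -> {set 'I_s}) : Prop :=
  exists a b c : 'I_r,
    [/\ a != b, b != c, a != c,
        [&& cover_adj C a b, cover_adj C b c & cover_adj C c a]
      & C b :\: C a = C c :\: C a].

(* Elements of S^r, represented as functions 'I_r -> S (coordinates with
   respect to the standard basis e'_1, ..., e'_r). *)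
Definition vecS (K : fieldType) (s r : nat) := 'I_r -> {mpoly K[s]}.

(* For an edge {C_i, C_j} (i < j) with C_j = (C_i \ {t_k'}) u {t_k}:
   the column  t_k e'_i - t_k' e'_j  of LS(I_c(G)).
   t_k is the unique element of C_j \ C_i and t_k' the unique element of
   C_i \ C_j. *)
Definition LS_column (K : fieldType) (s r : nat) (C : 'I_r -> {set 'I_s})
  (i j : 'I_r) : vecS K s r :=
  let tk  : {mpoly K[s]} := oapp (fun k => 'X_k) 0 [pick x in C j :\: C i] in
  let tk' : {mpoly K[s]} := oapp (fun k => 'X_k) 0 [pick x in C i :\: C j] in
  fun l => (if l == i then tk else 0) - (if l == j then tk' else 0).

Definition LS_columns (K : fieldType) (s r : nat) (C : 'I_r -> {set 'I_s})
  (v : vecS K s r) : Prop :=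
  exists i j : 'I_r, [/\ (i < j)%N, cover_adj C i j & v = LS_column K C i j].

Definition in_span (K : fieldType) (s r : nat) (P : vecS K s r -> Prop)
  (v : vecS K s r) : Prop :=
  exists (m : nat) (g : 'I_m -> vecS K s r) (c : 'I_m -> {mpoly K[s]}),
    (forall n, P (g n)) /\
    forall l : 'I_r, v l = \sum_(n < m) c n * g n l.

Definition minimal_generating_system (K : fieldType) (s r : nat)
  (P : vecS K s r -> Prop) : Prop :=
  forall f, P f -> ~ in_span (fun g => P g /\ g <> f) f.

(* All minimal vertex covers have the same size, so adjacent covers differ by
   a single exchange C_j = (C_i \ {t_k'}) u {t_k}.  In a strong 3-cycle
   {C_a, C_b, C_c} both exchanges out of C_a bring in the same vertex, and the
   column of {C_b, C_c} is then the difference of the columns of {C_a, C_c} and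
   {C_a, C_b}, so F is not minimal.  Conversely, if the column
   t_k e'_i - t_k' e'_j is an S-combination of other columns, the coefficient
   of the monomial t_k in the i-th coordinate must come from a column of a
   neighbour C_v of C_i with C_v \ C_i = {t_k} = C_j \ C_i, and C_i, C_j, C_v
   is a strong 3-cycle. *)

From HB Require Import structures.
From mathcomp Require Import all_boot all_algebra.
From mathcomp Require Import multinomials.mpoly.
From mathcomp Require Import zify ring.

Set Implicit Arguments.
Unset Strict Implicit.
Unset Printing Implicit Defensive.
Import GRing.Theory.

Section ExchangeSets.

Variable T : finType.
Implicit Types A B D : {set T}.

Lemma cardsD_eq1 A B :
  #|A| = #|B| -> #|A :|: B| = (#|A| + 1)%N ->
  #|B :\: A| = 1%N /\ #|A :\: B| = 1%N.
Proof.
by move=> eqAB cardU; have := cardsUI A B; rewrite !cardsD cardU setIC; lia.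
Qed.

Lemma cardsU_succ_of_setD A B D :
  #|A| = #|B| -> #|A| = #|D| -> #|A :|: B| = (#|A| + 1)%N ->
  B :\: A = D :\: A -> B != D -> #|B :|: D| = (#|B| + 1)%N.
Proof.
move=> eqAB eqAD cardAB eqBDA neqBD.
have subBD : B :|: D \subset A :|: B.
  apply/subsetP => x; rewrite !inE => /orP [-> | Dx]; first by rewrite orbT.
  case Ax: (x \in A) => //=.
  have : x \in D :\: A by rewrite inE Ax Dx.
  by rewrite -eqBDA inE => /andP [].
have ltBU : (#|B| < #|B :|: D|)%N.
  rewrite ltnNge; apply: contra neqBD => leUB.
  have eqUB : B :|: D = B by apply/eqP; rewrite eq_sym eqEcard subsetUl leUB.
  by rewrite eq_sym eqEcard -{1}eqUB subsetUr -eqAB eqAD leqnn.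
by have := subset_leq_card subBD; lia.
Qed.

Lemma setD_eq_of_setD A B D :
  #|A| = #|B| -> #|A| = #|D| ->
  #|A :|: B| = (#|A| + 1)%N -> #|B :|: D| = (#|B| + 1)%N ->
  B :\: A = D :\: A -> D :\: B = A :\: B.
Proof.
move=> eqAB eqAD cardAB cardBD eqBDA.
have [_ cardAB1] := cardsD_eq1 eqAB cardAB.
have [cardDB1 _] := cardsD_eq1 (etrans (esym eqAB) eqAD) cardBD.
apply/eqP; rewrite eqEcard cardAB1 cardDB1 leqnn andbT.
apply/subsetP => x; rewrite !inE => /andP [nBx Dx]; rewrite nBx /=.
apply: contraNT nBx => nAx.
have : x \in D :\: A by rewrite inE nAx Dx.
by rewrite -eqBDA inE => /andP [].
Qed.

End ExchangeSets.

Local Open Scope ring_scope.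

Lemma mcoeffU_mulX_neq0 (R : nzRingType) n (p : {mpoly R[n]}) (m k : 'I_n) :
  (p * 'X_m)@_U_(k) != 0 -> m = k.
Proof.
rewrite mcoeff_eq0 negbK (perm_mem (msuppMX _ _)) => /mapP [m' _].
move/(congr1 (fun mm : 'X_{1..n} => mm m)); rewrite mnmDE !mnm1E eqxx.
by case: eqP => // _; lia.
Qed.

Lemma in_span_lin2 (K : fieldType) s r (P : vecS K s r -> Prop)
    (f g h : vecS K s r) (a b : {mpoly K[s]}) :
  P g -> P h -> (forall l, f l = a * g l + b * h l) -> in_span P f.
Proof.
move=> Pg Ph fE; exists 2%N, (fun n : 'I_2 => if n == ord0 then g else h),
  (fun n : 'I_2 => if n == ord0 then a else b).
split=> [n | l]; first by case: ifP.
by rewrite !big_ord_recl big_ord0 /= addr0 fE.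
Qed.

Section CoverGraph.

Variables (K : fieldType) (s r : nat) (C : 'I_r -> {set 'I_s}).
Hypothesis C_card : forall p q, #|C p| = #|C q|.
Hypothesis C_inj : injective C.

Local Notation col := (LS_column K C).

Lemma cover_adj_sym p q : cover_adj C p q -> cover_adj C q p.
Proof. by rewrite /cover_adj setUC (C_card p q). Qed.

Lemma cover_adj_setD p q : cover_adj C p q -> exists k, C q :\: C p = [set k].
Proof.
by move=> /eqP adj; apply/cards1P/eqP; case: (cardsD_eq1 (C_card p q) adj).
Qed.

Lemma strong_3cycle_of_setD i j v :
  i != j -> j != v -> i != v -> cover_adj C i j -> cover_adj C i v ->
  C j :\: C i = C v :\: C i -> has_strong_3cycle C.
Proof.
move=> nij njv niv adj_ij adj_iv eq_setD.
exists i, j, v; split=> //; apply/and3P; split=> //; last exact: cover_adj_sym.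
apply/eqP.
apply: cardsU_succ_of_setD (C_card i j) (C_card i v) (eqP adj_ij) eq_setD _.
by apply: contra njv => /eqP /C_inj ->.
Qed.

Lemma LS_columnN p q l : col q p l = - col p q l.
Proof.
rewrite /LS_column; case: (l == p); case: (l == q);
  by rewrite ?subr0 ?sub0r ?opprK ?opprB ?oppr0.
Qed.

Lemma LS_column_neq0 p q : p != q -> cover_adj C p q -> col p q p != 0.
Proof.
move=> npq adj_pq; have [k Dk] := cover_adj_setD adj_pq.
rewrite /LS_column eqxx (negbTE npq) subr0 Dk pick_set1 /=.
apply: contra_neq (oner_neq0 K) => /(congr1 (mcoeff U_(k))).
by rewrite mcoeffXU eqxx mcoeff0.
Qed.

Lemma LS_columns_unit p q : p != q -> cover_adj C p q ->
  exists g (u : {mpoly K[s]}),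
    [/\ LS_columns C g, u * u = 1 & forall l, g l = u * col p q l].
Proof.
move=> npq adj_pq; case: (ltngtP p q) => [lt_pq | lt_qp | /val_inj eq_pq].
- exists (col p q), 1; rewrite mulr1; split=> // [|l]; last by rewrite mul1r.
  by exists p, q.
- exists (col q p), (-1); rewrite mulrNN mulr1; split=> // [|l].
    by exists q, p; split=> //; apply: cover_adj_sym.
  by rewrite LS_columnN mulN1r.
- by rewrite eq_pq eqxx in npq.
Qed.

Lemma LS_column_triangle (a b c : 'I_r) :
  a != b -> b != c -> a != c ->
  cover_adj C a b -> cover_adj C b c -> cover_adj C a c ->
  C b :\: C a = C c :\: C a -> forall l, col b c l = col a c l - col a b l.
Proof.
move=> nab nbc nac adj_ab adj_bc adj_ac eq_setD l.
have eq_setD_b : C c :\: C b = C a :\: C b.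
  exact: setD_eq_of_setD (C_card a b) (C_card a c) (eqP adj_ab) (eqP adj_bc)
    eq_setD.
have eq_setD_c : C b :\: C c = C a :\: C c.
  exact: setD_eq_of_setD (C_card a c) (C_card a b) (eqP adj_ac)
    (eqP (cover_adj_sym adj_bc)) (esym eq_setD).
rewrite /LS_column eq_setD_b eq_setD_c eq_setD.
have [-> | nla] := eqVneq l a.
  by rewrite (negbTE nab) (negbTE nac); ring.
have [-> | nlb] := eqVneq l b; first by rewrite (negbTE nbc); ring.
by rewrite !subr0.
Qed.

Lemma strong_3cycle_not_minimal :
  has_strong_3cycle C -> ~ minimal_generating_system (LS_columns (K:=K) C).
Proof.
move=> [a [b [c [nab nbc nac /and3P [adj_ab adj_bc adj_ca] eq_setD]]]] minF.
have adj_ac := cover_adj_sym adj_ca.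
have [g1 [u1 [F_g1 u1u1 g1E]]] := LS_columns_unit nbc adj_bc.
have [g2 [u2 [F_g2 u2u2 g2E]]] := LS_columns_unit nac adj_ac.
have [g3 [u3 [F_g3 u3u3 g3E]]] := LS_columns_unit nab adj_ab.
have colE u g p q : u * u = 1 -> (forall l, g l = u * col p q l) ->
  forall l, col p q l = u * g l.
  by move=> uu gE l; rewrite gE mulrA uu mul1r.
have g1a : g1 a = 0.
  by rewrite g1E /LS_column (ifN_eq _ _ nab) (ifN_eq _ _ nac) subr0 mulr0.
have neq_g1 q g u : a != q -> cover_adj C a q -> u * u = 1 ->
  (forall l, g l = u * col a q l) -> g <> g1.
  move=> naq adj_aq uu gE eq_g; apply/negP: (LS_column_neq0 naq adj_aq).
  by rewrite (colE _ _ _ _ uu gE) eq_g g1a mulr0 eqxx.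
apply: (minF g1 F_g1).
apply: (@in_span_lin2 _ _ _ _ g1 g2 g3 (u1 * u2) (- (u1 * u3))).
- by split=> //; apply: neq_g1 nac adj_ac u2u2 g2E.
- by split=> //; apply: neq_g1 nab adj_ab u3u3 g3E.
move=> l.
rewrite g1E (LS_column_triangle nab nbc nac adj_ab adj_bc adj_ac eq_setD).
by rewrite (colE _ _ _ _ u2u2 g2E) (colE _ _ _ _ u3u3 g3E); ring.
Qed.

Lemma LS_column_mcoeff_neq0 (a b l : 'I_r) (k : 'I_s) (c : {mpoly K[s]}) :
  a != b -> cover_adj C a b -> (c * col a b l)@_U_(k) != 0 ->
  exists v, [/\ (a, b) = (l, v) \/ (a, b) = (v, l),
                cover_adj C l v & C v :\: C l = [set k]].
Proof.
move=> nab adj_ab; have [x Dx] := cover_adj_setD adj_ab.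
have [y Dy] := cover_adj_setD (cover_adj_sym adj_ab).
rewrite /LS_column Dx Dy !pick_set1 /=.
have [-> | nla] := eqVneq l a.
  rewrite (ifN_eq _ _ nab) subr0 => /mcoeffU_mulX_neq0 xk.
  by exists b; split; [left | | rewrite Dx xk].
have [-> | nlb] := eqVneq l b; last by rewrite subrr mulr0 mcoeff0 eqxx.
rewrite sub0r mulrN mcoeffN oppr_eq0 => /mcoeffU_mulX_neq0 yk.
by exists a; split; [right | exact: cover_adj_sym | rewrite Dy yk].
Qed.

Lemma LS_column_notin_span (i j : 'I_r) :
  ~ has_strong_3cycle C -> (i < j)%N -> cover_adj C i j ->
  ~ in_span (fun g => LS_columns C g /\ g <> col i j) (col i j).
Proof.
move=> no_strong lt_ij adj_ij [m [g [c [F_g colE]]]].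
have nij : i != j by rewrite neq_ltn lt_ij.
have [k Dk] := cover_adj_setD adj_ij.
have := congr1 (mcoeff U_(k)) (colE i).
rewrite {1}/LS_column eqxx (negbTE nij) subr0 Dk pick_set1 /= mcoeffXU eqxx.
rewrite raddf_sum big1 => [/eqP | n _]; first by rewrite oner_eq0.
have [[a [b [lt_ab adj_ab gE]]] neq_g] := F_g n.
have nab : a != b by rewrite neq_ltn lt_ab.
apply/eqP; apply: contraT; rewrite gE => /(LS_column_mcoeff_neq0 nab adj_ab).
case=> v [ab_iv adj_iv Dv]; exfalso; apply: no_strong.
apply: (strong_3cycle_of_setD nij _ _ adj_ij adj_iv); last by rewrite Dk Dv.
- apply/eqP => jv; case: ab_iv => -[ea eb].
    by apply: neq_g; rewrite gE ea eb jv.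
  by move: lt_ab lt_ij; rewrite ea eb -jv; lia.
- by apply/eqP => iv; case: ab_iv => -[ea eb]; rewrite ea eb iv eqxx in nab.
Qed.

End CoverGraph.

Theorem proposition4p10 (K : fieldType) (s : nat) (e : rel 'I_s)
  (r : nat) (C : 'I_r -> {set 'I_s}) :
  simple_graph e -> unmixed e -> enum_min_covers e C ->
  (minimal_generating_system (LS_columns (K:=K) C) <-> ~ has_strong_3cycle C).
Proof.
move=> _ unmixed_e [C_inj C_enum].
have C_card p q : #|C p| = #|C q|.
  by apply: unmixed_e; apply/C_enum; [exists p | exists q].
split=> [minF strong | no_strong f [i [j [lt_ij adj_ij ->]]]].
  exact: strong_3cycle_not_minimal C_card strong minF.
exact: (LS_column_notin_span (K:=K) C_card C_inj no_strong lt_ij adj_ij).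
Qed.
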